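(* Let $m\ge2$, $n\ge0$, $0\le k\le n$, input $\rho=|\vec n_0\rangle\langle\vec n_0|$ with $N_0=N(\vec n_0)$. For $\vec\alpha\in\mathbb C^m$ and $g\in\mathrm{SU}(m)$, the heterodyne filter function $$f_{\lambda_k}(\vec\alpha,g):=\frac{1}{s_{\lambda_k}}\langle\vec\alpha|\,\tau^m(g)\,[P_{\lambda_k}(\rho)]\,\tau^m(g)^\dagger\,|\vec\alpha\rangle$$ is given by $$f_{\lambda_k}(\vec\alpha,g)=\frac{(-1)^{\varphi(N_0)}}{s_{\lambda_k}}\sum_{M\in\mathrm{GT}(\lambda_k)}C^{M}_{N_0,\bar N_0}\sum_{N'\in\mathrm{GT}(\tau_n^m)}(-1)^{\varphi(N')}C^{M}_{N',\bar N'}\,\big|\langle\vec\alpha|\tau_n^m(g)|\vec n'\rangle\big|^2,$$ where $|\vec n'\rangle=|N'\rangle$ and $s_{\lambda_k}$ is the heterodyne frame-operator eigenvalue.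
   Context: Fix integers $m\ge 2$, $n\ge0$. $\mathcal H_n^m$ is the span of Fock states $|\vec n\rangle=|n_1,\dots,n_m\rangle$, $\vec n\in\mathbb N^m$, $\sum_in_i=n$. $\tau^m$ denotes the unitary action of $\mathrm{SU}(m)$ by passive transformations on the full $m$-mode Fock space, whose restriction to $\mathcal H_n^m$ is the totally symmetric irrep $\tau_n^m$; $\bar\tau_n^m$ is its complex conjugate in the Fock basis; $\omega_n^m(g)(X)=\tau_n^m(g)X\tau_n^m(g)^\dagger\cong\tau_n^m\otimes\bar\tau_n^m$. $\lambda_k$ is the irrep with Young diagram $(2k,k,\dots,k,0)$ (first row $2k$ boxes, rows $2,\dots,m-1$ with $k$ boxes, empty last row), $d_{\lambda_k}$ its dimension; $\tau_n^m\otimes\bar\tau_n^m\cong\bigoplus_{k=0}^n\lambda_k$ multiplicity-free, and $P_{\lambda_k}$ is the orthogonal (Hilbert–Schmidt) projector onto the $\lambda_k$ component of $\mathcal B(\mathcal H_n^m)$. Gelfand–Tsetlin (GT) patterns: for an irrep $\lambda=(\lambda_1,\dots,\lambda_m)$, $\lambda_m=0$, a GT pattern $M=(M_{i,j})_{1\le i\le j\le m}$ has $M_{i,m}=\lambda_i$ and $M_{i,j+1}\ge M_{i,j}\ge M_{i+1,j+1}$; $\mathrm{GT}(\lambda)$ is the set of such patterns and $\{|M\rangle\}$ the orthonormal GT basis (Condon–Shortley convention). The Fock state $|\vec n\rangle$ is identified with the GT basis vector $|N\rangle$ of $\tau_n^m$ with $N_{1,j}=n_1+\dots+n_j$, $N_{i,j}=0$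 for $i\ge2$; write $N=N(\vec n)$. The dual pattern is $\bar M_{i,l}:=M_{1,m}-M_{l-i+1,l}$. With $s_M(k)=\sum_{j=1}^k\sum_{i=1}^jM_{i,j}$ and $M_{\max}$ the highest-weight pattern, $\varphi(M):=s_M(m-1)-s_{M_{\max}}(m-1)\in\mathbb Z$, so that $|N\rangle=(-1)^{\varphi(N)}|\bar N\rangle$ when the Fock vector is regarded as a basis vector of $\bar\tau_n^m$. Real Clebsch–Gordan coefficients: $C^M_{N_1,\bar N_2}:=\langle N_1,\bar N_2|M\rangle$ for $N_1,N_2\in\mathrm{GT}(\tau_n^m)$, $M\in\mathrm{GT}(\lambda_k)$, with $|N_1\rangle\otimes|\bar N_2\rangle=\sum_k\sum_{M\in\mathrm{GT}(\lambda_k)}C^M_{N_1,\bar N_2}|M\rangle$. Coherent states: for $\vec\alpha\in\mathbb C^m$, $|\vec\alpha\rangle=e^{-|\vec\alpha|^2/2}\sum_{\vec n\in\mathbb N^m}\frac{\vec\alpha^{\vec n}}{\sqrt{\vec n!}}|\vec n\rangle$. Heterodyne frame-operator eigenvalue: $s_{\lambda_k}:=d_{\lambda_k}^{-1}\int_{\mathbb C^m}d^2\vec\alpha\,\langle\vec\alpha|P_{\lambda_k}(|\vec\alpha\rangle\langle\vec\alpha|)|\vec\alpha\rangle$ (with $P_{\lambda_k}$ applied after compressing to $\mathcal H_n^m$), assumed nonzero. *)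

From mathcomp Require Import all_boot all_algebra.
From mathcomp Require Import all_classical all_reals all_analysis.
From mathcomp Require Export complex.
Set Implicit Arguments. Unset Strict Implicit. Unset Printing Implicit Defensive.
Import GRing.Theory Num.Theory.
Local Open Scope ring_scope.
Local Open Scope complex_scope.

Section Defs.
Variable R : realType.
Local Notation C := R[i].
Variable m : nat.

Definition occ := {ffun 'I_m -> nat}.
(* basis of H_n^m: occupation vectors with total photon number n *)
Definition fockb (n : nat) := {f : {ffun 'I_m -> 'I_n.+1} | \sum_i (f i : nat) == n}.
Definition occ_of n (a : fockb n) : occ := [ffun i => (val a i : nat)].
Definition occfact (a : occ) : nat := (\prod_i (a i)`!)%N.

Definition op n := fockb n -> fockb n -> C.
Definition opmul n (X Y : op n) : op n := fun a c => \sum_b X a b * Y b c.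
Definition adj n (X : op n) : op n := fun a c => (X c a)^*.
Definition hs n (X Y : op n) : C := \sum_a \sum_c (X a c)^* * Y a c.
Definition ketbra n (x y : occ) : op n :=
  fun a c => ((occ_of a == x) && (occ_of c == y))%:R.

(* tau(g): a_i^dagger |-> sum_j g_{ji} a_j^dagger.  Matrix element
   <a|tau(g)|b> = sqrt(a! b!) sum_K prod_{i,j} g_{ji}^{K_ij} / K_ij!,
   K ranging over nonnegative integer m x m matrices with row sums b and column sums a
   (K_ij = number of the b_i photons of input mode i sent to output mode j).
   The same polynomial formula defines the holomorphic extension to all complex g. *)
Definition tau_el n (g : 'M[C]_m) (a b : occ) : C :=
  (Num.sqrt ((occfact a * occfact b)%N%:R : R))%:C *
  \sum_(K : {ffun 'I_m * 'I_m -> 'I_n.+1} |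
          [forall i, \sum_j (K (i, j) : nat) == b i] &&
          [forall j, \sum_i (K (i, j) : nat) == a j])
     \prod_(p : 'I_m * 'I_m) (g p.2 p.1 ^+ K p / ((K p)`!)%:R).
Definition tau n (g : 'M[C]_m) : op n := fun a c => tau_el n g (occ_of a) (occ_of c).

Definition omega n (g : 'M[C]_m) (X : op n) : op n := opmul (opmul (tau g) X) (adj (tau g)).
(* holomorphic extension X |-> tau(g) X tau(g^{-1}) (used for highest-weight vectors) *)
Definition omegaC n (g : 'M[C]_m) (X : op n) : op n := opmul (opmul (tau g) X) (tau (invmx g)).

Definition is_SU (g : 'M[C]_m) : Prop :=
  g *m (map_mx (fun z : C => z^*) g)^T = 1%:M /\ \det g = 1.

Definition lamk (k : nat) (i : nat) : nat :=
  if i == 0%N then (2 * k)%N else if i == m.-1 then 0%N else k.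

Definition upper_unitriangular (u : 'M[C]_m) : Prop :=
  (forall i, u i i = 1) /\ (forall i j : 'I_m, (j < i)%N -> u i j = 0).
Definition sl_diag (t : 'M[C]_m) : Prop :=
  (forall i j : 'I_m, i != j -> t i j = 0) /\ \det t = 1.

Definition hw_vector n k (X : op n) : Prop :=
  (forall u, upper_unitriangular u -> omegaC u X = X) /\
  (forall t, sl_diag t ->
     omegaC t X = fun a c => (\prod_(i < m) t i i ^+ lamk k i) * X a c).

Definition inspan n (S : op n -> Prop) (Y : op n) : Prop :=
  exists (r : nat) (c : 'I_r -> C) (v : 'I_r -> op n),
    (forall i, S (v i)) /\ Y = fun a d => \sum_i c i * v i a d.

(* the lambda_k isotypic component: span of the SU(m)-orbits of its highest-weight vectors *)
Definition Vk n k : op n -> Prop :=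
  inspan (fun Y => exists g X, is_SU g /\ hw_vector k X /\ Y = omega g X).

Definition lin_indep n r (v : 'I_r -> op n) : Prop :=
  forall c : 'I_r -> C, (fun a d => \sum_i c i * v i a d) = (fun _ _ => 0) ->
  forall i, c i = 0.
Definition dimV n (V : op n -> Prop) : nat :=
  (\max_(r < (#|{: fockb n}| ^ 2).+1 |
      `[< exists v : 'I_r -> op n, (forall i, V (v i)) /\ lin_indep v >]) r)%N.

Definition orth_proj n (V : op n -> Prop) (P : op n -> op n) : Prop :=
  forall X, V (P X) /\ (forall Y, V Y -> hs Y (fun a c => X a c - P X a c) = 0).

Definition normsq (al : 'I_m -> C) : R :=
  \sum_i ((complex.Re (al i)) ^+ 2 + (complex.Im (al i)) ^+ 2).
Definition coh (al : 'I_m -> C) (x : occ) : C :=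
  (expR (- normsq al / 2))%:C * (\prod_i al i ^+ x i) / (Num.sqrt ((occfact x)%:R : R))%:C.
Definition expect n (al : 'I_m -> C) (Y : op n) : C :=
  \sum_a \sum_c (coh al (occ_of a))^* * Y a c * coh al (occ_of c).
(* |alpha><alpha| compressed to H_n^m *)
Definition cohproj n (al : 'I_m -> C) : op n :=
  fun a c => coh al (occ_of a) * (coh al (occ_of c))^*.
Definition coh_tau n (al : 'I_m -> C) (g : 'M[C]_m) (x : occ) : C :=
  \sum_(a : fockb n) (coh al (occ_of a))^* * tau_el n g (occ_of a) x.

Fixpoint iint (k : nat) (F : (nat -> R) -> R) : R :=
  match k with
  | 0%N => F (fun _ => 0)
  | k'.+1 => Rintegral (@lebesgue_measure R) setT
               (fun x => iint k' (fun v => F (fun i => if i == k' then x else v i)))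
  end.
(* integral over C^m w.r.t. d^2 alpha = prod_i d Re(alpha_i) d Im(alpha_i) *)
Definition int_Cm (G : ('I_m -> C) -> R) : R :=
  iint (2 * m) (fun v => G (fun i => (v (2 * i)%N) +i* (v (2 * i).+1))).

(* heterodyne frame-operator eigenvalue s_{lambda_k} (integrand is real; we integrate its real part) *)
Definition s_lam n k (P : op n -> op n) : R :=
  ((dimV (@Vk n k))%:R)^-1 *
  int_Cm (fun al => complex.Re (expect al (P (cohproj al)))).

(* patterns with entries bounded by B; M_{i,j} (0-indexed, i <= j) *)
Definition gtp (B : nat) := {ffun 'I_m -> {ffun 'I_m -> 'I_B.+1}}.
Definition ent B (M : gtp B) (i j : nat) : nat :=
  match @insub nat (fun x => x < m)%N 'I_m i, @insub nat (fun x => x < m)%N 'I_m j with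
  | Some i', Some j' => M i' j'
  | _, _ => 0%N
  end.
(* M in GT(lam): top row lam, interlacing M_{i,j+1} >= M_{i,j} >= M_{i+1,j+1};
   entries below the diagonal (i > j) are set to 0 *)
Definition is_GT B (lam : nat -> nat) (M : gtp B) : bool :=
  [forall i : 'I_m, ent M i m.-1 == lam i] &&
  [forall i : 'I_m, forall j : 'I_m, (j < i)%N ==> (ent M i j == 0%N)] &&
  [forall i : 'I_m, forall j : 'I_m, ((i <= j)%N && (j.+1 < m)%N) ==>
      ((ent M i j <= ent M i j.+1)%N && (ent M i.+1 j.+1 <= ent M i j)%N)].
(* top row of tau_n^m: (n, 0, ..., 0) *)
Definition toprow (n : nat) (i : nat) : nat := if i == 0%N then n else 0%N.

Definition sM B (M : gtp B) (k : nat) : nat := (\sum_(j < k) \sum_(i < j.+1) ent M i j)%N.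
(* the same for the highest-weight pattern M_max (M_{i,j} = lam_i) *)
Definition sMmax (lam : nat -> nat) (k : nat) : nat := (\sum_(j < k) \sum_(i < j.+1) lam i)%N.
Definition phi B (lam : nat -> nat) (M : gtp B) : int := (sM M m.-1)%:Z - (sMmax lam m.-1)%:Z.
Definition sgn (z : int) : C := (-1) ^ z.

Definition N_of n (a : fockb n) : gtp n :=
  [ffun i : 'I_m => [ffun j : 'I_m => if (i : nat) == 0%N then inord (\sum_(l < m | (l <= j)%N) (val a l : nat))
                        else ord0]].
(* the occupation vector n' with |n'> = |N'> *)
Definition occ_of_gt B (N : gtp B) : occ :=
  [ffun j : 'I_m => (ent N 0 j - (if (j : nat) is j'.+1 then ent N 0 j' else 0))%N].

(* real Clebsch--Gordan coefficient C^M_{N1, bar N2} = <N1, bar N2 | M>, where the basis vector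
   |M> of lambda_k is realized as the operator bM in B(H_n^m) ~ H (x) bar H, and the Fock
   vector |N2> of bar tau equals (-1)^{phi(N2)} |bar N2>. *)
Definition CG n (bM : op n) (N1 N2 : gtp n) : C :=
  sgn (phi (toprow n) N2) * hs (ketbra (occ_of_gt N1) (occ_of_gt N2)) bM.

Definition GT_real_onb n k (b : gtp (2 * k) -> op n) : Prop :=
  (forall M, is_GT (lamk k) M -> @Vk n k (b M)) /\
  (forall M M', is_GT (lamk k) M -> is_GT (lamk k) M' -> hs (b M) (b M') = (M == M')%:R) /\
  (forall Y, @Vk n k Y -> exists c : gtp (2 * k) -> C,
       Y = fun a d => \sum_(M | is_GT (lamk k) M) c M * b M a d) /\
  (forall M a d, (b M a d)^* = b M a d).

Definition filter_fn n k (P : op n -> op n) (n0 : fockb n) (al : 'I_m -> C) (g : 'M[C]_m) : C :=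
  ((s_lam k P)^-1)%:C *
  expect al (omega g (P (ketbra (occ_of n0) (occ_of n0)))).

End Defs.

(* The input rho = |n0><n0| has torus weight zero, and the lambda_k component is stable
   under the maximal torus of SU(m), which acts unitarily for the Hilbert--Schmidt product;
   hence the orthogonal projection P rho is torus invariant.  An off-diagonal entry
   |a><c| (a <> c) carries a nontrivial torus character, so P rho is diagonal in the Fock
   basis.  For a diagonal operator Z, <alpha| tau(g) Z tau(g)^dagger |alpha> is
   sum_d Z_dd |<alpha|tau(g)|d>|^2, and expanding P rho in the real orthonormal basis
   (b_M) gives (P rho)_dd = sum_M (b_M)_{n0 n0} (b_M)_dd.  The Clebsch--Gordan
   coefficients C^M_{N,bar N} are exactly the entries (b_M)_{NN} up to the sign
   (-1)^phi(N), which squares to 1, and the patterns GT(tau_n^m) are in bijection with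
   the Fock basis through N. *)

From mathcomp Require Import all_boot all_algebra.
From mathcomp Require Import all_classical all_reals all_analysis.
From mathcomp Require Import complex ring.
Set Implicit Arguments. Unset Strict Implicit. Unset Printing Implicit Defensive.
Import GRing.Theory Num.Theory.
Local Open Scope ring_scope.

Section HilbertSchmidt.
Variables (R : realType) (m n : nat).
Local Notation op := (op R m n).

Lemma occ_of_inj : injective (@occ_of m n).
Proof.
move=> a c /ffunP eq_ac; apply/val_inj/ffunP => i; apply: val_inj.
by have := eq_ac i; rewrite !ffunE.
Qed.

Lemma ketbra_occE (x y a c : fockb m n) :
  ketbra R (occ_of x) (occ_of y) a c = ((a == x) && (c == y))%:R.
Proof. by rewrite /ketbra !(inj_eq occ_of_inj). Qed.

Lemma hs_sumr (I : finType) (Q : pred I) (c : I -> R[i]) (A : op) (B : I -> op) :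
  hs A (fun a d => \sum_(M | Q M) c M * B M a d) = \sum_(M | Q M) c M * hs A (B M).
Proof.
rewrite /hs; under eq_bigr => a _ do under eq_bigr => d _ do rewrite mulr_sumr.
under eq_bigr => a _ do rewrite exchange_big /=.
rewrite exchange_big; apply: eq_bigr => M _; rewrite mulr_sumr; apply: eq_bigr => a _.
by rewrite mulr_sumr; apply: eq_bigr => d _; rewrite mulrCA.
Qed.

Lemma hs_subr (A X Y : op) : hs A (fun a c => X a c - Y a c) = hs A X - hs A Y.
Proof.
rewrite /hs -sumrB; apply: eq_bigr => a _.
by rewrite -sumrB; apply: eq_bigr => c _; rewrite mulrBr.
Qed.

Lemma hs_ketbral (x : fockb m n) (B : op) :
  hs (ketbra R (occ_of x) (occ_of x)) B = B x x.
Proof.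
rewrite /hs (bigD1 x) //= [X in _ + X]big1 ?addr0 => [|a ax]; last first.
  by apply: big1 => c _; rewrite ketbra_occE (negbTE ax) /= conjC0 mul0r.
rewrite (bigD1 x) //= [X in _ + X]big1 => [|c cx]; last first.
  by rewrite ketbra_occE (negbTE cx) andbF conjC0 mul0r.
by rewrite ketbra_occE eqxx conjC1 mul1r addr0.
Qed.

Lemma hs_ketbrar (x : fockb m n) (B : op) :
  hs B (ketbra R (occ_of x) (occ_of x)) = (B x x)^*.
Proof.
rewrite /hs (bigD1 x) //= [X in _ + X]big1 ?addr0 => [|a ax]; last first.
  by apply: big1 => c _; rewrite ketbra_occE (negbTE ax) /= mulr0.
rewrite (bigD1 x) //= [X in _ + X]big1 => [|c cx]; last first.
  by rewrite ketbra_occE (negbTE cx) andbF mulr0.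
by rewrite ketbra_occE eqxx mulr1 addr0.
Qed.

End HilbertSchmidt.

Section OrthonormalBasis.
Variables (R : realType) (m n k : nat) (b : gtp m (2 * k) -> op R m n).
Hypothesis hb : GT_real_onb b.

Lemma onb_expansion (X Y : op R m n) : Vk k Y ->
  (forall M, is_GT (lamk m k) M -> hs (b M) (fun a c => X a c - Y a c) = 0) ->
  Y = fun a d => \sum_(M | is_GT (lamk m k) M) hs (b M) X * b M a d.
Proof.
move=> VY perpY; have [_ [bON [bspan _]]] := hb; have [c eqY] := bspan _ VY; subst Y.
apply/funext => a; apply/funext => d; apply: eq_bigr => M HM; congr (_ * _).
move/eqP: (perpY M HM); rewrite hs_subr hs_sumr subr_eq0 => /eqP ->.
rewrite (bigD1 M) //= bON // eqxx mulr1 big1 ?addr0 // => M' /andP [HM' neM].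
by rewrite bON // eq_sym (negbTE neM) mulr0.
Qed.

Lemma orth_proj_unique (P : op R m n -> op R m n) (X Y : op R m n) :
  orth_proj (Vk k) P -> Vk k Y ->
  (forall M, is_GT (lamk m k) M -> hs (b M) (fun a c => X a c - Y a c) = 0) ->
  Y = P X.
Proof.
move=> hP VY perpY; have [VPX perpPX] := hP X.
have [bV _] := hb.
by rewrite (onb_expansion VY perpY) [RHS](onb_expansion VPX (fun M HM => perpPX _ (bV M HM))).
Qed.

End OrthonormalBasis.

Section TorusAction.
Variables (R : realType) (m n : nat).
Local Notation C := R[i].
Implicit Types (tv : 'I_m -> C) (x : occ m) (X Y : op R m n).

Definition torus_char tv x : C := \prod_i tv i ^+ x i.
Definition torus tv : 'M[C]_m := diag_mx (\row_i tv i).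
Definition torus_act tv X : op R m n :=
  fun a c => torus_char tv (occ_of a) * (torus_char tv (occ_of c))^* * X a c.
Definition in_torus tv := (forall i, tv i * (tv i)^* = 1) /\ \prod_i tv i = 1.

Lemma tau_el_torusl tv (g : 'M[C]_m) x y :
  tau_el n (torus tv *m g) x y = torus_char tv x * tau_el n g x y.
Proof.
rewrite /tau_el mulrCA; congr (_ * _); rewrite mulr_sumr.
apply: eq_bigr => K /andP [_ /forallP colK].
have -> : \prod_(p : 'I_m * 'I_m) ((torus tv *m g) p.2 p.1 ^+ K p / ((K p)`!)%:R) =
    \prod_(p : 'I_m * 'I_m) tv p.2 ^+ K p *
    \prod_(p : 'I_m * 'I_m) (g p.2 p.1 ^+ K p / ((K p)`!)%:R).
  by rewrite -big_split; apply: eq_bigr => p _; rewrite mul_diag_mx !mxE exprMn /= mulrA.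
congr (_ * _).
have -> : \prod_(p : 'I_m * 'I_m) tv p.2 ^+ K p = \prod_i \prod_j tv j ^+ K (i, j).
  by rewrite pair_bigA; apply: eq_bigr => -[i j].
rewrite exchange_big /=.
by apply: eq_bigr => j _; rewrite prodrXr (eqP (colK j)).
Qed.

Lemma omega_torusl tv (g : 'M[C]_m) X :
  omega (torus tv *m g) X = torus_act tv (omega g X).
Proof.
apply/funext => a; apply/funext => c; rewrite /omega /opmul /adj /tau /torus_act.
rewrite !mulr_sumr; apply: eq_bigr => d _.
under eq_bigr => e _ do rewrite tau_el_torusl -mulrA.
by rewrite tau_el_torusl rmorphM -mulr_sumr; ring.
Qed.

Lemma in_torus_conj tv : in_torus tv -> in_torus (fun i => (tv i)^*).
Proof.
case=> unit_tv det_tv; split; last by rewrite -rmorph_prod det_tv rmorph1.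
by move=> i; rewrite conjCK mulrC.
Qed.

Lemma is_SU_torusl tv (g : 'M[C]_m) : in_torus tv -> is_SU g -> is_SU (torus tv *m g).
Proof.
case=> unit_tv det_tv [unitary_g det_g]; split; last first.
  by rewrite det_mulmx det_g mulr1 det_diag; under eq_bigr do rewrite mxE.
rewrite (map_mxM (conjc : {rmorphism C -> C})) trmx_mul mulmxA -(mulmxA (torus tv)).
rewrite unitary_g mulmx1 (map_diag_mx (conjc : {rmorphism C -> C})) tr_diag_mx mulmx_diag.
by apply/matrixP => i j; rewrite !mxE unit_tv.
Qed.

Lemma Vk_torus_act k tv Y : in_torus tv -> Vk k Y -> Vk k (torus_act tv Y).
Proof.
move=> tv_torus [r [c [v [Vv ->]]]]; exists r, c, (fun i => torus_act tv (v i)); split.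
  move=> i; have [g [X [SUg [hwX ->]]]] := Vv i.
  by exists (torus tv *m g), X; rewrite omega_torusl; split => //; apply: is_SU_torusl.
apply/funext => a; apply/funext => d; rewrite /torus_act mulr_sumr.
by apply: eq_bigr => i _; rewrite mulrCA.
Qed.

Lemma torus_char_conj tv x : torus_char (fun i => (tv i)^*) x = (torus_char tv x)^*.
Proof. by rewrite /torus_char rmorph_prod; apply: eq_bigr => i _; rewrite rmorphXn. Qed.

Lemma torus_char_unit tv x : in_torus tv -> torus_char tv x * (torus_char tv x)^* = 1.
Proof.
case=> unit_tv _; rewrite -torus_char_conj /torus_char -big_split /=.
by apply: big1 => i _; rewrite -exprMn unit_tv expr1n.
Qed.

Lemma hs_torus_act tv (A Y : op R m n) :
  hs A (torus_act tv Y) = hs (torus_act (fun i => (tv i)^*) A) Y.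
Proof.
rewrite /hs /torus_act; apply: eq_bigr => a _; apply: eq_bigr => c _.
by rewrite !torus_char_conj !rmorphM /= !conjCK; ring.
Qed.

Lemma torus_act_ketbra tv x : in_torus tv -> torus_act tv (ketbra R x x) = ketbra R x x.
Proof.
move=> tv_torus; apply/funext => a; apply/funext => c; rewrite /torus_act /ketbra.
case: andP => [[/eqP -> /eqP ->]|_]; last by rewrite mulr0.
by rewrite torus_char_unit // mul1r.
Qed.

End TorusAction.

Lemma occ_sum m n (a : fockb m n) : (\sum_i occ_of a i)%N = n.
Proof. by rewrite -[RHS](eqP (valP a)); apply: eq_bigr => i _; rewrite ffunE. Qed.

Lemma occ_neq_exists_ltn m n (a c : fockb m n) : a != c ->
  exists p, (occ_of c p < occ_of a p)%N.
Proof.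
move=> neq_ac; apply/existsP; apply: contraR neq_ac; rewrite negb_exists => /forallP ge_ca.
have le_ac i : (occ_of a i <= occ_of c i)%N by rewrite leqNgt ge_ca.
apply/eqP/occ_of_inj/ffunP => i; apply/eqP; rewrite eqn_leq le_ac /= -subn_eq0.
have := sumnB (index_enum 'I_m) (P := predT) (fun i _ => le_ac i).
by rewrite !occ_sum subnn => /eqP; rewrite sum_nat_eq0 => /forallP /(_ i).
Qed.

Lemma exists_unit_not_root (R : rcfType) (d : nat) : (0 < d)%N ->
  exists2 z : R[i], z * z^* = 1 & z ^+ d != 1.
Proof.
move=> d_gt0; have d2_gt0 : (0 < d * 2)%N by rewrite muln_gt0 d_gt0.
exists ((d * 2).-root (-1)).
  by rewrite -normCK norm_rootC normrN1 rootC1 // expr1n.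
apply/eqP => zd1; have := rootCK d2_gt0 (-1 : R[i]); rewrite exprM zd1 expr1n => /eqP.
by rewrite -subr_eq0 opprK -(natrD _ 1 1) pnatr_eq0.
Qed.

Section TorusSeparation.
Variables (R : realType) (m n : nat).

Lemma torus_char_pair (p q : 'I_m) (z w : R[i]) (x : occ m) : p != q ->
  torus_char (fun i => if i == p then z else if i == q then w else 1) x = z ^+ x p * w ^+ x q.
Proof.
move=> neq_pq; rewrite /torus_char (bigD1 p) // (bigD1 q) /=; last by rewrite eq_sym.
rewrite eqxx eq_sym (negbTE neq_pq) eqxx big1 ?mulr1 // => i /andP [ip iq].
by rewrite (negbTE ip) (negbTE iq) expr1n.
Qed.

Lemma torus_separates (a c : fockb m n) : a != c ->
  exists2 tv : 'I_m -> R[i], in_torus tv &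
    torus_char tv (occ_of a) * (torus_char tv (occ_of c))^* != 1.
Proof.
move=> neq_ac; have [p ltp] := occ_neq_exists_ltn neq_ac.
have [q ltq] : exists q, (occ_of a q < occ_of c q)%N.
  by apply: occ_neq_exists_ltn; rewrite eq_sym.
have neq_pq : p != q by apply: contraTneq ltp => ->; rewrite -leqNgt ltnW.
set d := (occ_of a p - occ_of c p + (occ_of c q - occ_of a q))%N.
have [z unit_z zd] : exists2 z : R[i], z * z^* = 1 & z ^+ d != 1.
  by apply: exists_unit_not_root; rewrite addn_gt0 subn_gt0 ltp.
(* t = z at p and z^* = z^-1 at q: the character of |a><c| is then z^d. *)
exists (fun i => if i == p then z else if i == q then z^* else 1).
  split; last first.
    rewrite (bigD1 p) // (bigD1 q) /=; last by rewrite eq_sym.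
    rewrite eqxx eq_sym (negbTE neq_pq) eqxx.
    by rewrite big1 ?mulr1 // => i /andP [/negbTE -> /negbTE ->].
  by move=> i; case: ifP => _; [|case: ifP => _]; rewrite ?conjCK ?rmorph1 ?mulr1 // mulrC.
have cancel_pow e1 e2 u v :
    z ^+ (e1 + u) * z^* ^+ e2 * (z^* ^+ e1 * z ^+ (e2 + v)) = z ^+ (u + v).
  transitivity ((z * z^*) ^+ e1 * (z * z^*) ^+ e2 * z ^+ (u + v)).
    by rewrite !exprD !exprMn; ring.
  by rewrite unit_z !expr1n !mul1r.
rewrite !torus_char_pair // rmorphM !rmorphXn /= conjCK.
by rewrite -(subnKC (ltnW ltp)) -(subnKC (ltnW ltq)) cancel_pow.
Qed.

End TorusSeparation.

Section TorusInvariance.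
Variables (R : realType) (m n k : nat).
Variables (P : op R m n -> op R m n) (b : gtp m (2 * k) -> op R m n).
Hypotheses (hP : orth_proj (Vk k) P) (hb : GT_real_onb b).

Lemma proj_ketbra_torus_fixed tv x :
  in_torus tv -> torus_act tv (P (ketbra R x x)) = P (ketbra R x x).
Proof.
move=> tv_torus; have [bV _] := hb; have [VP perpP] := hP (ketbra R x x).
apply: (orth_proj_unique hb hP); first exact: Vk_torus_act.
move=> M HM.
have -> : (fun a c => ketbra R x x a c - torus_act tv (P (ketbra R x x)) a c) =
    torus_act tv (fun a c => ketbra R x x a c - P (ketbra R x x) a c).
  rewrite -{1}(torus_act_ketbra n x tv_torus).
  by apply/funext => a; apply/funext => c; rewrite /torus_act mulrBr.
rewrite hs_torus_act; apply/perpP/Vk_torus_act/bV => //; exact: in_torus_conj.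
Qed.

Lemma proj_ketbra_offdiag x (a c : fockb m n) : a != c -> P (ketbra R x x) a c = 0.
Proof.
move=> neq_ac; have [tv tv_torus char_neq1] := torus_separates R neq_ac.
have /= fixed_ac := congr1 (fun Y => Y a c) (proj_ketbra_torus_fixed x tv_torus).
apply/eqP; apply: contraR char_neq1 => nz; apply/eqP/(mulIf nz).
by rewrite mul1r -[in RHS]fixed_ac.
Qed.

Lemma proj_ketbra_diag (x d : fockb m n) :
  P (ketbra R (occ_of x) (occ_of x)) d d = \sum_(M | is_GT (lamk m k) M) b M x x * b M d d.
Proof.
have [bV [_ [_ b_real]]] := hb; have [VP perpP] := hP (ketbra R (occ_of x) (occ_of x)).
rewrite (onb_expansion hb VP (fun M HM => perpP _ (bV M HM))).
by apply: eq_bigr => M _; rewrite hs_ketbrar; congr (_ * _); apply: b_real.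
Qed.

End TorusInvariance.

Lemma expect_omega_diag (R : realType) m n (al : 'I_m -> R[i]) (g : 'M[R[i]]_m)
    (Z : op R m n) :
  (forall a c, a != c -> Z a c = 0) ->
  expect al (omega g Z) = \sum_d Z d d * `|coh_tau n al g (occ_of d)| ^+ 2.
Proof.
move=> Z_diag; have omegaE a c : omega g Z a c =
    \sum_d tau_el n g (occ_of a) (occ_of d) * Z d d * (tau_el n g (occ_of c) (occ_of d))^*.
  rewrite /omega /opmul /adj /tau; apply: eq_bigr => d _; congr (_ * _).
  by rewrite (bigD1 d) //= big1 ?addr0 // => e ne; rewrite Z_diag ?mulr0.
rewrite /expect; under eq_bigr => a _ do under eq_bigr => c _ do
  rewrite omegaE mulr_sumr mulr_suml.
under eq_bigr => a _ do rewrite exchange_big /=.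
rewrite exchange_big; apply: eq_bigr => d _.
rewrite normCK /coh_tau rmorph_sum mulr_suml mulr_sumr; apply: eq_bigr => a _.
rewrite mulr_sumr mulr_sumr; apply: eq_bigr => c _.
by rewrite rmorphM /= conjCK; ring.
Qed.

Section GelfandTsetlin.
Variables (m B : nat).
Implicit Types (M : gtp m B) (lam : nat -> nat).

Lemma entE M i j (lt_im : (i < m)%N) (lt_jm : (j < m)%N) :
  ent M i j = M (Ordinal lt_im) (Ordinal lt_jm).
Proof. by rewrite /ent !insubT. Qed.

Lemma ent_ord M (i j : 'I_m) : ent M i j = M i j.
Proof.
by rewrite (entE M (ltn_ord i) (ltn_ord j)); congr (nat_of_ord (M _ _)); apply: val_inj.
Qed.

Lemma ent_out_row M i j : (m <= i)%N -> ent M i j = 0%N.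
Proof. by move=> le_mi; rewrite /ent insubN // -leqNgt. Qed.

Lemma ent_out_col M i j : (m <= j)%N -> ent M i j = 0%N.
Proof. by move=> le_mj; rewrite /ent; case: insub => // ?; rewrite insubN // -leqNgt. Qed.

Lemma is_GTP lam M : is_GT lam M ->
  [/\ forall i : 'I_m, ent M i m.-1 = lam i,
      forall i j, (i < m)%N -> (j < i)%N -> ent M i j = 0%N &
      forall i j, (i <= j)%N -> (j.+1 < m)%N -> (ent M i j <= ent M i j.+1)%N].
Proof.
case/andP => /andP [/forallP top /forallP below] /forallP interlace; split.
- by move=> i; apply/eqP/top.
- move=> i j lt_im lt_ji; have lt_jm := ltn_trans lt_ji lt_im.
  by have /forallP /(_ (Ordinal lt_jm)) := below (Ordinal lt_im); rewrite /= lt_ji => /eqP.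
- move=> i j le_ij lt_j1m; have lt_jm := ltn_trans (ltnSn j) lt_j1m.
  have lt_im := leq_ltn_trans le_ij lt_jm.
  by have /forallP /(_ (Ordinal lt_jm)) := interlace (Ordinal lt_im);
    rewrite /= le_ij lt_j1m => /andP [].
Qed.

Lemma GT_row_mono lam M i j j' : is_GT lam M ->
  (i <= j)%N -> (j <= j')%N -> (j' < m)%N -> (ent M i j <= ent M i j')%N.
Proof.
case/is_GTP => _ _ step le_ij; elim: j' => [|j' IH]; first by rewrite leqn0 => /eqP ->.
rewrite leq_eqVlt ltnS => /orP [/eqP -> // | le_jj'] lt_j'm.
exact: leq_trans (IH le_jj' (ltnW lt_j'm)) (step _ _ (leq_trans le_ij le_jj') lt_j'm).
Qed.

End GelfandTsetlin.

Section FockGT.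
Variables (m n : nat).
Implicit Types (f : occ m) (a : fockb m n) (N : gtp m n).

Definition occ_prefix f (j : nat) : nat := (\sum_(l < m | (l <= j)%N) f l)%N.

Lemma occ_prefix_mono f : {homo occ_prefix f : j j' / (j <= j')%N}.
Proof.
move=> j j' le_jj'; rewrite /occ_prefix.
rewrite [X in (X <= _)%N]big_mkcond [X in (_ <= X)%N]big_mkcond.
by apply: leq_sum => l _; case: ifP => // le_lj; rewrite (leq_trans le_lj le_jj').
Qed.

Lemma occ_prefix_full f j : (m.-1 <= j)%N -> occ_prefix f j = (\sum_l f l)%N.
Proof.
move=> le_m1j; apply: eq_bigl => l; apply: leq_trans le_m1j.
by rewrite -ltnS (ltn_predK (ltn_ord l)).
Qed.

Lemma occ_prefix0 f (lt_0m : (0 < m)%N) : occ_prefix f 0 = f (Ordinal lt_0m).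
Proof.
rewrite /occ_prefix (big_pred1 (Ordinal lt_0m)) // => l /=; rewrite leqn0.
by apply/eqP/eqP => [l0|->//]; apply: val_inj.
Qed.

Lemma occ_prefixS f j (lt_j1m : (j.+1 < m)%N) :
  occ_prefix f j.+1 = (occ_prefix f j + f (Ordinal lt_j1m))%N.
Proof.
rewrite /occ_prefix (bigD1 (Ordinal lt_j1m)) //= addnC; congr (_ + _)%N.
by apply: eq_bigl => l; rewrite -val_eqE /= andbC -ltn_neqAle ltnS.
Qed.

Lemma occ_prefix_le a j : (occ_prefix (occ_of a) j <= n)%N.
Proof.
apply: leq_trans (occ_prefix_mono _ (leq_maxl j m.-1)) _.
by rewrite occ_prefix_full ?leq_maxr // occ_sum.
Qed.

Lemma N_of_ent a i j :
  ent (N_of a) i j = if (i == 0%N) && (j < m)%N then occ_prefix (occ_of a) j else 0%N.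
Proof.
have [lt_im|le_mi] := ltnP i m; last first.
  rewrite ent_out_row //; case: eqP => // i0; case: ltnP => // lt_jm.
  by move: le_mi; rewrite i0 leqNgt (leq_ltn_trans _ lt_jm).
have [lt_jm|le_mj] := ltnP j m; last by rewrite ent_out_col // andbF.
rewrite andbT (entE _ lt_im lt_jm) !ffunE /=; case: eqP => // _.
have -> : (\sum_(l < m | (l <= j)%N) (sval a l : nat))%N = occ_prefix (occ_of a) j.
  by apply: eq_bigr => l _; rewrite ffunE.
by rewrite inordK // ltnS occ_prefix_le.
Qed.

Lemma N_of_GT a : is_GT (toprow n) (N_of a).
Proof.
have lt_m1m (i : 'I_m) : (m.-1 < m)%N by rewrite (ltn_predK (ltn_ord i)).
apply/andP; split; first (apply/andP; split).
- apply/forallP => i; rewrite N_of_ent /toprow lt_m1m // andbT.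
  by case: ifP => // _; rewrite occ_prefix_full // occ_sum.
- apply/forallP => i; apply/forallP => j; apply/implyP => lt_ji.
  by rewrite N_of_ent; case: (nat_of_ord i) lt_ji.
- apply/forallP => i; apply/forallP => j; apply/implyP => /andP [_ lt_j1m].
  rewrite !N_of_ent /= lt_j1m (ltnW lt_j1m) andbT.
  by case: ifP => // _; rewrite occ_prefix_mono.
Qed.

Lemma occ_N_of a : occ_of_gt (N_of a) = occ_of a.
Proof.
apply/ffunP => j; rewrite ffunE !N_of_ent eqxx ltn_ord /=.
case: j => [[|j] lt_jm] /=.
  by rewrite occ_prefix0 subn0; congr (occ_of a _); apply: val_inj.
by rewrite N_of_ent eqxx (ltn_trans (ltnSn j) lt_jm) /= (occ_prefixS _ lt_jm) addnC addnK.
Qed.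

End FockGT.

Section FockGTSurjective.
Variables (m n : nat) (N : gtp m n).
Hypotheses (lt_0m : (0 < m)%N) (GT_N : is_GT (toprow n) N).

Let lt_m1m : (m.-1 < m)%N. Proof. by rewrite (ltn_predK lt_0m). Qed.

Lemma GT_toprow_row0 : ent N 0 m.-1 = n.
Proof. by have [top _ _] := is_GTP GT_N; have := top (Ordinal lt_0m). Qed.

Lemma GT_toprow_rowS i j : i != 0%N -> ent N i j = 0%N.
Proof.
move=> i_neq0; have [top below _] := is_GTP GT_N.
have [lt_im|] := ltnP i m; last exact: ent_out_row.
have [lt_jm|] := ltnP j m; last exact: ent_out_col.
have [lt_ji|le_ij] := ltnP j i; first exact: below.
apply/eqP; rewrite -leqn0; apply: leq_trans (GT_row_mono GT_N le_ij _ lt_m1m) _.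
  by rewrite -ltnS (ltn_predK lt_0m).
by rewrite (top (Ordinal lt_im)) /toprow /= (negbTE i_neq0).
Qed.

Lemma GT_toprow_le j : (ent N 0 j <= n)%N.
Proof.
have [lt_jm|] := ltnP j m; last by move/ent_out_col ->.
by rewrite -{2}GT_toprow_row0 (GT_row_mono GT_N _ _ lt_m1m) // -ltnS (ltn_predK lt_0m).
Qed.

Lemma occ_prefix_of_gt j : (j < m)%N -> occ_prefix (occ_of_gt N) j = ent N 0 j.
Proof.
elim: j => [|j IH] lt_jm; first by rewrite (occ_prefix0 _ lt_jm) ffunE subn0.
rewrite (occ_prefixS _ lt_jm) IH ?(ltn_trans (ltnSn j) lt_jm) // ffunE /= subnKC //.
exact: GT_row_mono GT_N _ (leqnSn j) lt_jm.
Qed.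

Definition fockb_of_gt (n0 : fockb m n) : fockb m n :=
  insubd n0 [ffun j => inord (occ_of_gt N j)].

Lemma occ_fockb_of_gt n0 : occ_of (fockb_of_gt n0) = occ_of_gt N.
Proof.
have occ_inord j : ([ffun j => inord (occ_of_gt N j)] j : 'I_n.+1) = occ_of_gt N j :> nat.
  by rewrite ffunE inordK // ltnS ffunE (leq_trans (leq_subr _ _)) ?GT_toprow_le.
have sum_n : (\sum_i ([ffun j => inord (occ_of_gt N j)] i : 'I_n.+1) == n)%N.
  under eq_bigr do rewrite occ_inord.
  by rewrite -(occ_prefix_full _ (leqnn _)) occ_prefix_of_gt // GT_toprow_row0.
by apply/ffunP => j; rewrite ffunE /fockb_of_gt val_insubd sum_n occ_inord.
Qed.

Lemma N_of_fockb_of_gt n0 : N_of (fockb_of_gt n0) = N.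
Proof.
apply/ffunP => i; apply/ffunP => j; apply: val_inj => /=.
rewrite -!ent_ord N_of_ent ltn_ord andbT occ_fockb_of_gt.
by case: eqP => [-> | /eqP i_neq0]; [rewrite occ_prefix_of_gt | rewrite GT_toprow_rowS].
Qed.

End FockGTSurjective.

(* [n0] only supplies the default value of [insubd] in [fockb_of_gt]. *)
Lemma sum_GT_toprow (R : realType) m n (n0 : fockb m n) (F : gtp m n -> R[i]) :
  (0 < m)%N ->
  \sum_(N : gtp m n | is_GT (toprow n) N) F N = \sum_(a : fockb m n) F (N_of a).
Proof.
move=> lt_0m; rewrite (reindex_onto (@N_of m n) (fun N => fockb_of_gt N n0)) /=; last first.
  by move=> N GT_N; apply: N_of_fockb_of_gt.
apply: eq_bigl => a; rewrite N_of_GT; apply/eqP/occ_of_inj.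
by rewrite occ_fockb_of_gt ?N_of_GT // occ_N_of.
Qed.

Lemma sgn_mulss (R : realType) (z : int) : sgn R z * sgn R z = 1.
Proof. by rewrite /sgn -expfzMl mulrNN mulr1 exp1rz. Qed.

Local Open Scope complex_scope.

Theorem mainTheorem13 (R : realType) (m n k : nat) (hm : (2 <= m)%N) (hk : (k <= n)%N)
  (n0 : fockb m n)
  (P : op R m n -> op R m n) (hP : orth_proj (@Vk R m n k) P)
  (b : gtp m (2 * k) -> op R m n) (hb : GT_real_onb b)
  (hs0 : s_lam k P != 0)
  (al : 'I_m -> R[i]) (g : 'M[R[i]]_m) (hg : is_SU g) :
  filter_fn k P n0 al g =
  ((s_lam k P)^-1)%:C * sgn R (phi (toprow n) (N_of n0)) *
  \sum_(M | is_GT (lamk m k) M)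
     CG (b M) (N_of n0) (N_of n0) *
     \sum_(N' : gtp m n | is_GT (toprow n) N')
        sgn R (phi (toprow n) N') * CG (b M) N' N' *
        `| coh_tau n al g (occ_of_gt N') | ^+ 2.
Proof.
have lt_0m : (0 < m)%N by apply: leq_trans hm.
have CG_N_of M a : CG (b M) (N_of a) (N_of a) = sgn R (phi (toprow n) (N_of a)) * b M a a.
  by rewrite /CG occ_N_of hs_ketbral.
rewrite /filter_fn -mulrA; congr (_ * _).
rewrite expect_omega_diag; last exact: (proj_ketbra_offdiag hP hb).
rewrite mulr_sumr; under [RHS]eq_bigr => M _.
  rewrite (sum_GT_toprow n0) //.
  under eq_bigr => a _ do rewrite CG_N_of [_ * (_ * _)]mulrA sgn_mulss mul1r occ_N_of.
  rewrite CG_N_of !mulrA sgn_mulss mul1r mulr_sumr.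
  over.
rewrite exchange_big; apply: eq_bigr => a _.
by rewrite (proj_ketbra_diag hP hb n0 a) mulr_suml; apply: eq_bigr => M _; rewrite mulrA.
Qed.
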